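(* Let $n\ge m\ge 2$ and let $\bm W\in\mathbb{R}^{m\times n}$ satisfy $\bm W\bm W^T=\bm I_m$ and $\bm\xi_m^T\bm W\bm\xi_n=1$. Let $\bm w_i^T$ denote the $i$-th row of $\bm W$, and define $\bm h_i:=\bm w_i-\operatorname{proj}_{\bm\xi_n}(\bm w_i)=\bm w_i-(\bm w_i^T\bm\xi_n)\bm\xi_n$ for $i=1,\dots,m$, and $\bm H=[\bm h_1\ \cdots\ \bm h_m]\in\mathbb{R}^{n\times m}$. Then for all $i,j\in\{1,\dots,m\}$, \[ (\bm H^T\bm H)_{ij}=\bm h_i^T\bm h_j=\begin{cases}\frac{m-1}{m}, & i=j,\\ -\frac1m, & i\ne j.\end{cases} \]
   Context: $\bm 1_k$ denotes the all-ones vector in $\mathbb{R}^k$ and $\bm\xi_k=\frac{1}{\sqrt k}\bm 1_k$. *)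

From HB Require Import structures.
From mathcomp Require Import all_boot all_order all_algebra.
From mathcomp Require Import reals.
Set Implicit Arguments. Unset Strict Implicit. Unset Printing Implicit Defensive.
Import Order.TTheory GRing.Theory Num.Theory.
Local Open Scope ring_scope.

Definition xi (R : realType) (k : nat) : 'cV[R]_k :=
  (Num.sqrt (k%:R : R))^-1 *: const_mx 1.

Definition hvec (R : realType) (m n : nat) (W : 'M[R]_(m, n)) (i : 'I_m) : 'cV[R]_n :=
  (row i W)^T - ((row i W *m xi R n) 0 0) *: xi R n.

Definition Hmat (R : realType) (m n : nat) (W : 'M[R]_(m, n)) : 'M[R]_(n, m) :=
  \matrix_(k < n, i < m) hvec W i k 0.

From HB Require Import structures.
From mathcomp Require Import all_boot all_order all_algebra.
From mathcomp Require Import reals.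
From mathcomp Require Import ring lra.
Set Implicit Arguments.
Unset Strict Implicit.
Unset Printing Implicit Defensive.

Import Order.TTheory GRing.Theory Num.Theory.
Local Open Scope ring_scope.

(* Put a := W xi_n.  The rows of W are orthonormal, so |a| <= |xi_n| = 1, while
   xi_m^T a = 1 with |xi_m| = 1; hence |a - xi_m|^2 <= 1 - 2 + 1 = 0 and
   a = xi_m, i.e. every row w_i has w_i^T xi_n = 1/sqrt m.  Then
   h_i^T h_j = w_i^T w_j - (w_i^T xi_n)(w_j^T xi_n) = [i = j] - 1/m. *)

Section Dot.
Variables (R : comPzRingType) (n : nat).
Implicit Types (x y u : 'cV[R]_n) (s t : R).

Lemma dotC x y : (x^T *m y) 0 0 = (y^T *m x) 0 0.
Proof. by rewrite !mxE; apply: eq_bigr => k _; rewrite !mxE mulrC. Qed.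

Lemma dot_subZ x y u s t :
  ((x - s *: u)^T *m (y - t *: u)) 0 0 =
  (x^T *m y) 0 0 - t * (x^T *m u) 0 0 - s * (u^T *m y) 0 0
    + s * t * (u^T *m u) 0 0.
Proof.
rewrite !mxE !mulr_sumr -!sumrB -big_split /=.
by apply: eq_bigr => k _; rewrite !mxE; ring.
Qed.

End Dot.

Lemma row_mul_tr_row (R : pzSemiRingType) (m p n : nat)
    (A : 'M[R]_(m, n)) (B : 'M[R]_(p, n)) i j :
  (row i A *m (row j B)^T) 0 0 = (A *m B^T) i j.
Proof. by rewrite !mxE; apply: eq_bigr => k _; rewrite !mxE. Qed.

Section RealDot.
Variable R : realDomainType.

Lemma dot_self_ge0 n (x : 'cV[R]_n) : 0 <= (x^T *m x) 0 0.
Proof. by rewrite mxE; apply: sumr_ge0 => k _; rewrite mxE -expr2 sqr_ge0. Qed.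

Lemma dot_self_eq0 n (x : 'cV[R]_n) : (x^T *m x) 0 0 = 0 -> x = 0.
Proof.
rewrite mxE => x0; apply/matrixP => k l; rewrite ord1 mxE.
have term_ge0 i : true -> 0 <= x^T 0 i * x i 0 by rewrite mxE -expr2 sqr_ge0.
have /eqP := @psumr_eq0P _ _ _ _ term_ge0 x0 k isT.
by rewrite mxE mulf_eq0 orbb => /eqP.
Qed.

Lemma coisometry_dot_le m n (W : 'M[R]_(m, n)) (v : 'cV[R]_n) :
  W *m W^T = 1%:M -> ((W *m v)^T *m (W *m v)) 0 0 <= (v^T *m v) 0 0.
Proof.
move=> WWt; set a := W *m v; set u := W^T *m a.
have vu : (v^T *m u) 0 0 = (a^T *m a) 0 0 by rewrite /u /a trmx_mul !mulmxA.
have uu : (u^T *m u) 0 0 = (a^T *m a) 0 0.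
  by rewrite /u trmx_mul trmxK mulmxA -(mulmxA _ W) WWt mulmx1.
(* |v - W^T W v|^2 = |v|^2 - |W v|^2 *)
have := dot_self_ge0 (v - u).
by rewrite -[u in v - u]scale1r dot_subZ (dotC u v) vu uu; lra.
Qed.

Lemma eq_of_dot_unit n (a u : 'cV[R]_n) :
  (u^T *m u) 0 0 = 1 -> (a^T *m a) 0 0 <= 1 -> (u^T *m a) 0 0 = 1 -> a = u.
Proof.
move=> uu aa ua; apply: subr0_eq; apply: dot_self_eq0; apply/le_anti.
by rewrite dot_self_ge0 andbT -[u in a - u]scale1r dot_subZ (dotC a u) ua uu; lra.
Qed.

End RealDot.

Section Xi.
Variable R : realType.

Lemma xiE k i : xi R k i 0 = (Num.sqrt (k%:R : R))^-1.
Proof. by rewrite !mxE mulr1. Qed.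

Lemma xi_mul_xi k i j : xi R k i 0 * xi R k j 0 = k%:R^-1.
Proof. by rewrite !xiE -expr2 exprVn sqr_sqrtr ?ler0n. Qed.

Lemma xi_dot_xi k : (0 < k)%N -> ((xi R k)^T *m xi R k) 0 0 = 1.
Proof.
move=> k0; rewrite mxE; under eq_bigr => i _ do rewrite mxE xi_mul_xi.
by rewrite sumr_const card_ord -[_^-1 *+ k]mulr_natl mulfV // pnatr_eq0 -lt0n.
Qed.

Lemma coisometry_xi m n (W : 'M[R]_(m, n)) :
  (0 < m)%N -> (0 < n)%N -> W *m W^T = 1%:M ->
  ((xi R m)^T *m W *m xi R n) 0 0 = 1 -> W *m xi R n = xi R m.
Proof.
move=> m0 n0 WWt Wxi; apply: eq_of_dot_unit; first exact: xi_dot_xi.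
  by rewrite -(xi_dot_xi n0) coisometry_dot_le.
by rewrite mulmxA.
Qed.

Lemma Hmat_gram m n (W : 'M[R]_(m, n)) i j :
  ((Hmat W)^T *m Hmat W) i j = ((hvec W i)^T *m hvec W j) 0 0.
Proof. by rewrite !mxE; apply: eq_bigr => k _; rewrite !mxE. Qed.

Lemma hvec_gram m n (W : 'M[R]_(m, n)) i j :
  (0 < n)%N -> W *m W^T = 1%:M ->
  ((hvec W i)^T *m hvec W j) 0 0 =
    (i == j)%:R - (W *m xi R n) i 0 * (W *m xi R n) j 0.
Proof.
move=> n0 WWt.
have rowE k : (row k W *m xi R n) 0 0 = (W *m xi R n) k 0.
  by rewrite -row_mul mxE.
rewrite /hvec dot_subZ trmxK row_mul_tr_row WWt (dotC _ (row j W)^T) trmxK.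
rewrite !rowE xi_dot_xi // mxE; ring.
Qed.

End Xi.

Theorem proposition2 (R : realType) (m n : nat) (W : 'M[R]_(m, n))
    (Hmn : (2 <= m <= n)%N)
    (HWW : W *m W^T = 1%:M)
    (Hxi : ((xi R m)^T *m W *m xi R n) 0 0 = 1) :
  forall i j : 'I_m,
    ((Hmat W)^T *m Hmat W) i j = ((hvec W i)^T *m hvec W j) 0 0 /\
    ((Hmat W)^T *m Hmat W) i j =
      (if i == j then (m%:R - 1) / m%:R else - 1 / m%:R).
Proof.
move=> i j; split; rewrite Hmat_gram //.
have m0 : (0 < m)%N by case/andP: Hmn => /ltnW.
have n0 : (0 < n)%N by case/andP: Hmn => _; apply: leq_trans.
have m_neq0 : (m%:R : R) != 0 by rewrite pnatr_eq0 -lt0n.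
rewrite hvec_gram // coisometry_xi // xi_mul_xi.
by case: eqP => _ /=; field.
Qed.
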